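(* For each positive integer $k$, $R_k\cong R_k^{k+1}$. Explicitly, for $A\in R_k$ and $l=1,\dots,k+1$, let $A_l$ be the $\mathbb{N}\times\mathbb{N}$ matrix whose first column is the $l$-th column of $A$ and whose blocks satisfy $A_l^{m,n}=A^{m,\,n+l+k(n-2)}$ for all $m\ge1$, $n\ge2$; then each $A_l\in R_k$ and the map $A\mapsto (A_1,\dots,A_{k+1})$ is a bijective left-$R_k$-linear map $R_k\to R_k^{k+1}$.
   Context: $\mathbb{N}=\{1,2,3,\dots\}$. $R$ denotes the ring of all $\mathbb{N}\times\mathbb{N}$ integer matrices with only finitely many nonzero entries in each row and each column, with entrywise addition and multiplication $(AB)_{i,j}=\sum_{l\ge1}a_{i,l}b_{l,j}$. Fix a positive integer $k$. Partition $\mathbb{N}$ into consecutive blocks $J_1=\{1\}$ and, for $m\ge2$, $J_m=\{2+k(m-2),\dots,1+k(m-1)\}$. For $A\in R$, the block $A^{m,n}$ is the submatrix with rows indexed by $J_m$ and columns by $J_n$. $R_k$ is the subring of $A\in R$ such that for all but finitely many pairs $(m,n)$ with $m,n\ge2$, $A^{m,n}=cI_k$ for some integer $c$. For a ring $S$, $S^n$ is the free left $S$-module of $n$-tuples with componentwise operations; $S^m\cong S^n$ means there is a bijective left-$S$-linear map $S^m\to S^n$, equivalently there exist $X\in M_{m\times n}(S)$, $Y\in M_{n\times m}(S)$ with $XY=I_m$, $YX=I_n$. *)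

From mathcomp Require Import all_boot all_order all_algebra.
Set Implicit Arguments. Unset Strict Implicit. Unset Printing Implicit Defensive.
Import GRing.Theory Num.Theory.
Local Open Scope ring_scope.

(* N x N integer matrices, 0-BASED: the paper's entry a_{i,j} (i,j >= 1)
   is stored as A (i-1) (j-1). *)
Definition mat := nat -> nat -> int.

Definition in_R (A : mat) : Prop :=
  (forall i, exists N, forall j, (N <= j)%N -> A i j = 0) /\
  (forall j, exists N, forall i, (N <= i)%N -> A i j = 0).

(* Block J_m (m >= 2) consists of the paper's indices 2+k(m-2),...,1+k(m-1),
   i.e. the 0-based indices 1+k(m-2)+p, p < k; J_1 = {paper index 1} = {0}. *)
Definition blk_start (k m : nat) : nat := (1 + k * (m - 2))%N.

Definition block_scalar (k : nat) (A : mat) (m n : nat) (c : int) : Prop :=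
  forall p q, (p < k)%N -> (q < k)%N ->
    A (blk_start k m + p)%N (blk_start k n + q)%N = (if p == q then c else 0).

(* R_k: for all but finitely many pairs (m,n) with m,n >= 2 (i.e. all pairs
   outside some square [2,M)^2), A^{m,n} is a scalar multiple of I_k. *)
Definition in_Rk (k : nat) (A : mat) : Prop :=
  in_R A /\
  exists M : nat, forall m n, (2 <= m)%N -> (2 <= n)%N ->
    ((M <= m)%N \/ (M <= n)%N) -> exists c : int, block_scalar k A m n c.

Definition mprod (A B C : mat) : Prop :=
  forall i j, exists N, forall M, (N <= M)%N ->
    C i j = \sum_(l < M) A i l * B l j.

Definition madd (A B : mat) : mat := fun i j => A i j + B i j.

(* The matrix A_l, l = 1..k+1 (paper indexing):
   first column = l-th column of A; A_l^{m,n} = A^{m, n+l+k(n-2)} for n >= 2.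
   Column j >= 1 (0-based) of A_l lies in block n = (j-1)/k + 2 at offset
   p = (j-1) %% k; it is column (blk_start k n' + p) of A, n' = n+l+k(n-2). *)
Definition Acomp (k l : nat) (A : mat) : mat :=
  fun i j =>
    if j == 0%N then A i (l - 1)%N
    else
      let n := ((j - 1) %/ k + 2)%N in
      let p := ((j - 1) %% k)%N in
      let n' := (n + l + k * (n - 2))%N in
      A i (blk_start k n' + p)%N.

From mathcomp Require Import all_boot all_order all_algebra.
From mathcomp Require Import zify.
From Stdlib Require Import FunctionalExtensionality.
Set Implicit Arguments. Unset Strict Implicit.

(* Column j of A_l is column [src_col k l j] of A, and (l, j) |-> src_col k l j
   is a bijection from {1..k+1} x N onto N with inverse
   c |-> (col_part k c, col_pos k c): the first k+1 columns of A are the first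
   columns of A_1, ..., A_(k+1), and the later column blocks of A are dealt out
   cyclically to A_1, ..., A_(k+1).  Hence A |-> (A_l)_l commutes with sums and
   with left multiplication, and its inverse glues k+1 matrices column by column.
   Block (m, n) of A_l is block (m, n + l + k(n-2)) of A, so R_k is preserved;
   conversely, a block (m, n) of the glued matrix is a block of some B_l when
   n >= 3, and is made of first columns of the B_l, which vanish far enough down,
   when n = 2. *)

Lemma edivn_mulDl d t p : p < d -> (d * t + p) %/ d = t /\ (d * t + p) %% d = p.
Proof.
move=> lt_pd; have d_gt0 : 0 < d by apply: leq_ltn_trans lt_pd.
by rewrite mulnC divnMDl // divn_small // addn0 modnMDl modn_small.
Qed.

Section ColumnBijection.
Variable k : nat.

Definition src_col (l j : nat) : nat :=
  if j == 0 then l - 1 else 1 + k * ((j - 1) %/ k * k.+1 + l) + (j - 1) %% k.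

Definition col_part (c : nat) : nat :=
  if c <= k then c.+1 else ((c - 1) %/ k - 1) %% k.+1 + 1.

Definition col_pos (c : nat) : nat :=
  if c <= k then 0 else 1 + k * (((c - 1) %/ k - 1) %/ k.+1) + (c - 1) %% k.

Lemma src_colS l t p : p < k -> src_col l (1 + k * t + p) = 1 + k * (t * k.+1 + l) + p.
Proof.
move=> lt_pk; rewrite /src_col -addnA add1n /= subSS subn0.
by case: (edivn_mulDl t lt_pk) => -> ->.
Qed.

Lemma src_col_blk l n q : 2 <= n -> q < k ->
  src_col l (blk_start k n + q) = blk_start k (n + l + k * (n - 2)) + q.
Proof.
move=> n_ge2 lt_qk; rewrite /blk_start src_colS //; congr (1 + k * _ + q).
by rewrite mulnS (mulnC (n - 2)); move: (k * (n - 2)); lia.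
Qed.

Lemma col_part_range c : 1 <= col_part c <= k.+1.
Proof.
rewrite /col_part; case: ifP => c_le; first lia.
by have := ltn_pmod ((c - 1) %/ k - 1) (ltn0Sn k); lia.
Qed.

Lemma blk_decomp n : 3 <= n ->
  exists l t, [/\ 1 <= l <= k.+1, 2 <= t, n <= t * k.+1 + 2 & n = t + l + k * (t - 2)].
Proof.
move=> n_ge3; have [lt_r en] := (ltn_pmod (n - 3) (ltn0Sn k), divn_eq (n - 3) k.+1).
move: lt_r en; set s := (n - 3) %/ k.+1; set r := (n - 3) %% k.+1 => lt_r en.
exists r.+1, s.+2; rewrite mulnS in en; split; [lia | lia | nia | nia].
Qed.

Hypothesis k_gt0 : 0 < k.

Lemma col_part_pos_src l j : 1 <= l <= k.+1 ->
  col_part (src_col l j) = l /\ col_pos (src_col l j) = j.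
Proof.
move=> /andP[l_ge1 l_le]; case: j => [|j].
  have l1_le : l - 1 <= k by lia.
  by rewrite /col_part /col_pos /src_col /= l1_le; split; lia.
have [lt_pk ej] := (ltn_pmod j k_gt0, divn_eq j k).
move: lt_pk ej; set t := j %/ k; set p := j %% k => lt_pk ej.
have -> : j.+1 = 1 + k * t + p by lia.
rewrite src_colS // /col_part /col_pos.
have k_le : k <= k * (t * k.+1 + l) by apply: leq_pmulr; lia.
have -> : (1 + k * (t * k.+1 + l) + p <= k) = false by apply/negbTE; rewrite -ltnNge; lia.
have -> : 1 + k * (t * k.+1 + l) + p - 1 = k * (t * k.+1 + l) + p by lia.
case: (edivn_mulDl (t * k.+1 + l) lt_pk) => -> ->.
have -> : t * k.+1 + l - 1 = k.+1 * t + (l - 1) by rewrite mulnC; lia.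
have lt_l1 : l - 1 < k.+1 by lia.
by case: (edivn_mulDl t lt_l1) => -> ->; split; lia.
Qed.

Lemma src_col_part_pos c : src_col (col_part c) (col_pos c) = c.
Proof.
rewrite /col_part /col_pos; case: ifP => [_|c_gtk]; first by rewrite /src_col /= subn1.
have [lt_pk ec] := (ltn_pmod (c - 1) k_gt0, divn_eq (c - 1) k).
move: lt_pk ec; set q := (c - 1) %/ k; set p := (c - 1) %% k => lt_pk ec.
have q_gt0 : 0 < q by rewrite lt0n; apply/eqP => q0; rewrite q0 mul0n add0n in ec; lia.
have [lt_r es] := (ltn_pmod (q - 1) (ltn0Sn k), divn_eq (q - 1) k.+1).
move: lt_r es; set s := (q - 1) %/ k.+1; set r := (q - 1) %% k.+1 => lt_r es.
rewrite src_colS //; have -> : s * k.+1 + (r + 1) = q by lia.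
by rewrite mulnC; lia.
Qed.

Lemma leq_src_col l j : 1 <= l -> j <= src_col l j.
Proof.
move=> l_ge1; case: j => [//|j].
have [lt_pk ej] := (ltn_pmod j k_gt0, divn_eq j k).
move: lt_pk ej; set t := j %/ k; set p := j %% k => lt_pk ej.
have -> : j.+1 = 1 + k * t + p by lia.
rewrite src_colS //; suff : k * t <= k * (t * k.+1 + l) by lia.
by rewrite leq_mul2l (leq_trans (leq_pmulr t (ltn0Sn k)) (leq_addr l _)) orbT.
Qed.

Lemma src_col_bound l j : l <= k.+1 -> src_col l j <= k * (j * k.+1 + k.+2).
Proof.
move=> l_le; case: j => [|j]; first by rewrite /src_col /=; nia.
have [lt_pk ej] := (ltn_pmod j k_gt0, divn_eq j k).
move: lt_pk ej; set t := j %/ k; set p := j %% k => lt_pk ej.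
have e : j.+1 = 1 + k * t + p by lia.
rewrite [in X in X <= _]e src_colS //.
have : t * k.+1 + l <= j.+1 * k.+1 + k.+1 by nia.
by move/(leq_mul (leqnn k)); nia.
Qed.

Lemma col_pos_large N : exists C, forall c, C <= c -> N <= col_pos c.
Proof.
exists (k * (N * k.+1 + k.+2)).+1 => c c_ge; rewrite leqNgt; apply/negP => lt_posN.
have := src_col_bound (col_pos c) (proj2 (andP (col_part_range c))).
rewrite src_col_part_pos; suff : k * (col_pos c * k.+1 + k.+2) <= k * (N * k.+1 + k.+2) by lia.
by rewrite leq_mul2l leq_add2r leq_mul2r ltnW ?orbT.
Qed.

End ColumnBijection.

Lemma ex_uniform_bound (P : nat -> nat -> Prop) (L : nat) :
  (forall l N N', N <= N' -> P l N -> P l N') ->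
  (forall l, 1 <= l <= L -> exists N, P l N) -> exists N, forall l, 1 <= l <= L -> P l N.
Proof.
move=> P_mono; elim: L => [|L IH] ex_P; first by exists 0 => l; lia.
have [l l_range|N PN] := IH; first by apply: ex_P; lia.
have [|N' PN'] := ex_P L.+1; first lia.
exists (maxn N N') => l /andP[l_ge1]; rewrite leq_eqVlt => /orP[/eqP ->|lt_lL].
  exact: P_mono (leq_maxr _ _) PN'.
by apply: P_mono (leq_maxl _ _) (PN l _); lia.
Qed.

Definition scalar_blocks_beyond (k : nat) (A : mat) (M : nat) : Prop :=
  forall m n, 2 <= m -> 2 <= n -> M <= m \/ M <= n ->
    exists c, block_scalar k A m n c.

Lemma scalar_blocks_beyond_mono k A M M' :
  M <= M' -> scalar_blocks_beyond k A M -> scalar_blocks_beyond k A M'.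
Proof. by move=> le_MM' hA m n m_ge2 n_ge2 far; apply: hA => //; lia. Qed.

Lemma AcompE k l A i j : Acomp k l A i j = A i (src_col k l j).
Proof.
rewrite /Acomp /src_col /blk_start; case: eqP => // _; congr (A i (1 + k * _ + _)).
by set t := _ %/ k; rewrite addnK mulnS (mulnC t); move: (k * t) => x; lia.
Qed.

Lemma block_scalar_Acomp k l A m n c : 2 <= n ->
  block_scalar k (Acomp k l A) m n c <-> block_scalar k A m (n + l + k * (n - 2)) c.
Proof.
by move=> n_ge2; split=> hA p q lt_pk lt_qk; rewrite -hA // AcompE src_col_blk.
Qed.

Lemma in_Rk_Acomp k l A : 0 < k -> 0 < l -> in_Rk k A -> in_Rk k (Acomp k l A).
Proof.
move=> k_gt0 l_gt0 [[A_rows A_cols] [M A_blocks]]; split; [split|].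
- move=> i; have [N A_iN] := A_rows i; exists N => j le_Nj; rewrite AcompE.
  exact/A_iN/(leq_trans le_Nj)/leq_src_col.
- move=> j; have [N A_Nj] := A_cols (src_col k l j).
  by exists N => i le_Ni; rewrite AcompE A_Nj.
- exists M => m n m_ge2 n_ge2 far.
  have far' : M <= m \/ M <= n + l + k * (n - 2) by case: far => far; [left | right]; lia.
  have [|c A_c] := A_blocks m _ m_ge2 _ far'; first lia.
  by exists c; apply/block_scalar_Acomp.
Qed.

Lemma Acomp_madd k l A B : Acomp k l (madd A B) = madd (Acomp k l A) (Acomp k l B).
Proof. by do 2 apply: functional_extensionality => ?; rewrite /madd !AcompE. Qed.

Lemma mprod_Acomp k l B A C : mprod B A C -> mprod B (Acomp k l A) (Acomp k l C).
Proof.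
move=> BAC i j; have [N sumN] := BAC i (src_col k l j).
by exists N => M le_NM; rewrite AcompE (sumN M le_NM); apply: eq_bigr => x _; rewrite AcompE.
Qed.

Lemma Acomp_inj k A A' : 0 < k ->
  (forall l, 1 <= l <= k.+1 -> Acomp k l A = Acomp k l A') -> A = A'.
Proof.
move=> k_gt0 eqA; apply: functional_extensionality => i; apply: functional_extensionality => c.
by have := congr1 (fun X => X i (col_pos k c)) (eqA _ (col_part_range k c));
  rewrite /= !AcompE src_col_part_pos.
Qed.

Definition Aglue (k : nat) (Bs : nat -> mat) : mat :=
  fun i c => Bs (col_part k c) i (col_pos k c).

Section Glue.
Variables (k : nat) (Bs : nat -> mat).
Hypothesis k_gt0 : 0 < k.

Lemma Acomp_glue l : 1 <= l <= k.+1 -> Acomp k l (Aglue k Bs) = Bs l.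
Proof.
move=> l_range; apply: functional_extensionality => i; apply: functional_extensionality => j.
by rewrite AcompE /Aglue; case: (col_part_pos_src k_gt0 j l_range) => -> ->.
Qed.

Lemma in_R_glue : (forall l, 1 <= l <= k.+1 -> in_R (Bs l)) -> in_R (Aglue k Bs).
Proof.
move=> Bs_R; split=> [i|c]; last first.
  have [_ B_cols] := Bs_R _ (col_part_range k c).
  by have [N B_N] := B_cols (col_pos k c); exists N => i le_Ni; apply: B_N.
have [N B_N] : exists N, forall l, 1 <= l <= k.+1 -> forall j, N <= j -> Bs l i j = 0%R.
  apply: ex_uniform_bound => [l N N' le_NN' B_N j le_N'j|l l_range].
    exact/B_N/(leq_trans le_NN').
  by have [B_rows _] := Bs_R l l_range; exact: B_rows.
have [C pos_ge] := col_pos_large k_gt0 N; exists C => c le_Cc.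
exact: B_N (col_part_range k c) _ (pos_ge c le_Cc).
Qed.

Lemma glue_block2_eq0 N : (forall l, 1 <= l <= k.+1 -> forall r, N <= r -> Bs l r 0 = 0%R) ->
  forall m, N.+2 <= m -> block_scalar k (Aglue k Bs) m 2 0%R.
Proof.
move=> B_col0 m le_Nm p q lt_pk lt_qk.
have l_range : 1 <= q.+2 <= k.+1 by lia.
have -> : blk_start k 2 + q = src_col k q.+2 0 by rewrite /blk_start /src_col /=; lia.
rewrite -AcompE Acomp_glue // B_col0 //; first by case: (p == q).
by have := leq_pmull (m - 2) k_gt0; rewrite /blk_start; lia.
Qed.

Lemma in_Rk_glue : (forall l, 1 <= l <= k.+1 -> in_Rk k (Bs l)) -> in_Rk k (Aglue k Bs).
Proof.
move=> Bs_Rk; split; first by apply: in_R_glue => l /Bs_Rk [].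
have [N B_N] : exists N, forall l, 1 <= l <= k.+1 ->
    scalar_blocks_beyond k (Bs l) N /\ forall r, N <= r -> Bs l r 0 = 0%R.
  apply: ex_uniform_bound => [l N N' le_NN' [B_blk B_col0]|l l_range].
    by split=> [|r le_N'r]; [exact: scalar_blocks_beyond_mono B_blk | apply: B_col0; lia].
  have [[_ B_cols] [M B_blk]] := Bs_Rk l l_range; have [N0 B_N0] := B_cols 0.
  exists (maxn M N0); split; first exact: scalar_blocks_beyond_mono (leq_maxl _ _) B_blk.
  by move=> r le_r; apply: B_N0; lia.
exists (N * k.+1 + 3) => m n m_ge2 n_ge2 far.
have [n_eq2 | n_ge3] : n = 2 \/ 3 <= n by lia.
  subst n; exists 0%R; apply: (glue_block2_eq0 (N := N)) => [l /B_N[] //|].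
  by case: far; nia.
have [l [t [l_range t_ge2 n_le n_eq]]] := blk_decomp k n_ge3.
have [B_blk _] := B_N l l_range.
have [|c B_c] := B_blk m t m_ge2 t_ge2; first by case: far; [left | right]; nia.
by exists c; rewrite n_eq; apply/block_scalar_Acomp => //; rewrite Acomp_glue.
Qed.

End Glue.

Theorem mainTheorem4 (k : nat) (hk : (0 < k)%N) :
  (forall A, in_Rk k A -> forall l, (1 <= l <= k.+1)%N -> in_Rk k (Acomp k l A)) /\
  (forall A B l, Acomp k l (madd A B) = madd (Acomp k l A) (Acomp k l B)) /\
  (forall B A C, in_Rk k B -> in_Rk k A -> mprod B A C ->
     forall l, (1 <= l <= k.+1)%N -> mprod B (Acomp k l A) (Acomp k l C)) /\
  (forall A A', in_Rk k A -> in_Rk k A' ->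
     (forall l, (1 <= l <= k.+1)%N -> Acomp k l A = Acomp k l A') -> A = A') /\
  (forall Bs : nat -> mat, (forall l, (1 <= l <= k.+1)%N -> in_Rk k (Bs l)) ->
     exists A, in_Rk k A /\ forall l, (1 <= l <= k.+1)%N -> Acomp k l A = Bs l).
Proof.
split; first by move=> A A_Rk l /andP[l_gt0 _]; exact: in_Rk_Acomp.
split; first by move=> A B l; exact: Acomp_madd.
split; first by move=> B A C _ _ BAC l _; exact: mprod_Acomp.
split; first by move=> A A' _ _; exact: Acomp_inj.
by move=> Bs Bs_Rk; exists (Aglue k Bs); split; [exact: in_Rk_glue | exact: Acomp_glue].
Qed.
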